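(* Let $G$ be a graph with $n\geq 1$ vertices, $m$ edges, and maximum degree at most $\Delta$, where $\Delta$ is a positive integer. Then $$irr(G)\leq \frac{(\Delta n-2m)\Delta m}{\Delta n-m}<\left(3-2\sqrt{2}\right)\Delta^2 n.$$
   Context: All graphs are finite, simple and undirected. For a graph $G$ with edge set $E(G)$ and vertex degrees $d_G(u)$, the irregularity (in the sense of Albertson) is $irr(G)=\sum_{uv\in E(G)}|d_G(u)-d_G(v)|$. *)

From mathcomp Require Import all_boot all_order all_algebra.
Set Implicit Arguments. Unset Strict Implicit. Unset Printing Implicit Defensive.
Import Order.TTheory GRing.Theory Num.Theory.

(* An (undirected) edge {u,v} is represented once, as the ordered
   pair (u,v) with e u v and enum_rank u < enum_rank v. *)
Definition simple_graph (T : finType) (e : rel T) : Prop :=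
  symmetric e /\ irreflexive e.

Definition deg (T : finType) (e : rel T) (u : T) : nat := #|[set v | e u v]|.

Definition is_edge (T : finType) (e : rel T) (p : T * T) : bool :=
  e p.1 p.2 && (enum_rank p.1 < enum_rank p.2)%N.

Definition nedges (T : finType) (e : rel T) : nat := #|[set p | is_edge e p]|.

Definition irr (T : finType) (e : rel T) : nat :=
  (\sum_(p : T * T | is_edge e p) `|((deg e p.1)%:Z - (deg e p.2)%:Z)%R|%N)%N.

From mathcomp Require Import all_boot all_order all_algebra.
From mathcomp Require Import zify ring lra.
Import Order.TTheory GRing.Theory Num.Theory.
Local Open Scope ring_scope.
Set Implicit Arguments. Unset Strict Implicit.

(* Per edge: if 0 < a, b <= D are the degrees of the endpoints, then for every
   real c we have |a - b| <= D - 2c - c^2/D + c^2 (1/a + 1/b); when a <= b this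
   is (a - c)^2/a + (D - b) + c^2 (1/b - 1/D) >= 0.  Summing over the m edges,
   and using that the sum over edges of 1/d(u) + 1/d(v) counts each
   non-isolated vertex once, gives irr(G) <= (D - 2c - c^2/D) m + c^2 n for
   every c.  The choice c = D m / (D n - m) turns the right-hand side into
   (D n - 2 m) D m / (D n - m).  The strict upper bound by (3 - 2 sqrt 2) D^2 n
   is a sum-of-squares identity; the square it involves is nonzero because
   sqrt 2 is irrational and D n - m is a positive integer (handshake lemma:
   2 m <= D n). *)

Lemma sum_edges_endpoints (V : nmodType) (T : finType) (e : rel T) (f : T -> V) :
  simple_graph e ->
  \sum_(p | is_edge e p) (f p.1 + f p.2) = \sum_u f u *+ deg e u.
Proof.
move=> [esym eirr].
have arcs : \sum_(p | e p.1 p.2) f p.1 = \sum_u f u *+ deg e u.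
  rewrite -(pair_big_dep predT (fun u v => e u v) (fun u _ => f u)) /=.
  by apply: eq_bigr => u _; rewrite /deg -sumr_const; apply: eq_bigl => v; rewrite inE.
rewrite -arcs [RHS](bigID (fun p : T * T => (enum_rank p.1 < enum_rank p.2)%N)) /=.
rewrite big_split /=; congr (_ + _).
have swapK : involutive (fun p : T * T => (p.2, p.1)) by case.
rewrite (reindex_inj (inv_inj swapK)) /=.
apply: eq_bigl => -[u v] /=; rewrite /is_edge /= esym.
have [->|neq_uv] := eqVneq u v; first by rewrite eirr.
have neq_rank : (enum_rank u : nat) != enum_rank v.
  by rewrite (inj_eq val_inj) (inj_eq enum_rank_inj).
by case: (e u v); rewrite //= -leqNgt ltn_neqAle eq_sym neq_rank.
Qed.

Lemma twice_nedges (R : pzSemiRingType) (T : finType) (e : rel T) :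
  simple_graph e -> 2 * (nedges e)%:R = \sum_u (deg e u)%:R :> R.
Proof.
move=> sg; rewrite -(sum_edges_endpoints (fun=> 1) sg) /nedges -sum1_card natr_sum mulr_sumr.
apply: eq_big => [p|p _]; first by rewrite inE.
by rewrite mulr1 mulr2n.
Qed.

(* Summing 1/d(u) + 1/d(v) over the edges counts each non-isolated vertex
   exactly once, hence is at most n. *)
Lemma sum_inverse_degrees_le (R : numFieldType) (T : finType) (e : rel T) :
  simple_graph e ->
  \sum_(p | is_edge e p) ((deg e p.1)%:R^-1 + (deg e p.2)%:R^-1) <= #|T|%:R :> R.
Proof.
move=> sg; rewrite (sum_edges_endpoints (fun u => (deg e u)%:R^-1 : R) sg).
rewrite -sum1_card natr_sum; apply: ler_sum => u _.
case: (deg e u) => [|k]; first by rewrite mulr0n.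
by rewrite -[leLHS]mulr_natr mulVf ?pnatr_eq0.
Qed.

Lemma edge_irregularity_le (R : realFieldType) (a b D c : R) :
  0 < a -> 0 < b -> a <= D -> b <= D ->
  `|a - b| <= D - 2 * c - c ^+ 2 / D + c ^+ 2 * (a^-1 + b^-1).
Proof.
wlog le_ab : a b / a <= b => [hwlog|] a0 b0 aD bD.
  have [ab|/ltW ba] := leP a b; first exact: hwlog.
  by rewrite distrC [a^-1 + _]addrC; apply: hwlog.
have D0 : 0 < D by apply: lt_le_trans bD.
have inv_bD : c ^+ 2 / D <= c ^+ 2 / b.
  by rewrite ler_wpM2l ?sqr_ge0 // lef_pV2.
have am_gm : 2 * c <= a + c ^+ 2 / a.
  rewrite -(ler_pM2r a0) [leRHS]mulrDl divfK ?gt_eqF //.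
  have : 0 <= (a - c) ^+ 2 by exact: sqr_ge0.
  lra.
rewrite distrC ger0_norm ?subr_ge0 // mulrDr; lra.
Qed.

Lemma irr_le_quadratic (R : realFieldType) (T : finType) (e : rel T) (D c : R) :
  simple_graph e -> (forall u, (deg e u)%:R <= D) ->
  (irr e)%:R <= (D - 2 * c - c ^+ 2 / D) * (nedges e)%:R + c ^+ 2 * #|T|%:R.
Proof.
move=> sg degD.
have deg_pos u v : e u v -> (0 < deg e u)%N.
  by move=> euv; apply/card_gt0P; exists v; rewrite inE.
apply: (@le_trans _ _ (\sum_(p | is_edge e p)
    (D - 2 * c - c ^+ 2 / D + c ^+ 2 * ((deg e p.1)%:R^-1 + (deg e p.2)%:R^-1)))).
  rewrite /irr natr_sum; apply: ler_sum => -[u v] /andP [/= euv _].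
  rewrite natr_absz intr_norm intrB -!pmulrn.
  have evu : e v u by rewrite (proj1 sg).
  apply: edge_irregularity_le; rewrite ?ltr0n ?degD //.
    exact: deg_pos euv.
  exact: deg_pos evu.
rewrite big_split /= -mulr_sumr sumr_const /nedges cardsE [X in _ <= X + _]mulr_natr lerD2l.
by rewrite ler_wpM2l ?sqr_ge0 ?sum_inverse_degrees_le.
Qed.

Lemma sqrt2_mul_nat_neq (R : rcfType) (p q : nat) :
  (0 < q)%N -> Num.sqrt (2 : R) * q%:R != p%:R.
Proof.
move=> q0; apply/eqP => /(congr1 (fun x => x ^+ 2)).
rewrite exprMn sqr_sqrtr ?ler0n // -!natrX -natrM => /eqP; rewrite eqr_nat => /eqP h2.
have p0 : (0 < p)%N by nia.
(* the 2-adic valuation of p ^ 2 is even, that of 2 * q ^ 2 is odd *)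
have := congr1 (logn 2) h2.
rewrite lognM ?expn_gt0 ?q0 // !lognX (_ : logn 2 2 = 1%N) //.
lia.
Qed.

(* The bound obtained with the optimal c lies strictly below (3 - 2 sqrt 2) D^2 n,
   by the identity (3 - 2s) D^2 n z - (Dn - 2m) D m = D (s z - D n)^2 with
   z = Dn - m and s = sqrt 2, provided s z != D n. *)
Lemma optimal_bound_lt (R : rcfType) (D n m : R) :
  0 < D -> 0 < D * n - m -> Num.sqrt 2 * (D * n - m) != D * n ->
  (D * n - 2 * m) * D * m / (D * n - m) < (3 - 2 * Num.sqrt 2) * D ^+ 2 * n.
Proof.
move=> D0 z0 s_neq; rewrite ltr_pdivrMr // -subr_gt0.
set s := Num.sqrt (2 : R).
have s2 : s ^+ 2 = 2 by rewrite sqr_sqrtr ?ler0n.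
have -> : (3 - 2 * s) * D ^+ 2 * n * (D * n - m) - (D * n - 2 * m) * D * m
    = D * (s * (D * n - m) - D * n) ^+ 2 + D * (2 - s ^+ 2) * (D * n - m) ^+ 2.
  by ring.
rewrite s2 subrr mulr0 mul0r addr0 mulr_gt0 // lt_def sqr_ge0 andbT.
by rewrite sqrf_eq0 subr_eq0.
Qed.

Theorem corollary1 (R : rcfType) (T : finType) (e : rel T) (Delta : nat) :
  simple_graph e ->
  (0 < #|T|)%N ->
  (0 < Delta)%N ->
  (forall u : T, (deg e u <= Delta)%N) ->
  let n : R := (#|T|)%:R in
  let m : R := (nedges e)%:R in
  let D : R := Delta%:R in
  (irr e)%:R <= (D * n - 2 * m) * D * m / (D * n - m) /\
  (D * n - 2 * m) * D * m / (D * n - m) < (3 - 2 * Num.sqrt 2) * D ^+ 2 * n.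
Proof.
move=> sg Tpos Dpos degD n m D.
have D0 : 0 < D by rewrite ltr0n.
have n0 : 0 < n by rewrite ltr0n.
have handshake : 2 * m <= D * n.
  rewrite /m twice_nedges // /n -sum1_card natr_sum mulr_sumr.
  by apply: ler_sum => u _; rewrite mulr1 ler_nat.
have m_nat : (nedges e <= Delta * #|T|)%N.
  by rewrite -(ler_nat R) natrM; move: (ler0n R (nedges e)); lra.
have zE : D * n - m = (Delta * #|T| - nedges e)%N%:R by rewrite natrB // natrM.
have z0 : 0 < D * n - m by move: (ler0n R (nedges e)) (mulr_gt0 D0 n0); lra.
split.
  set c := D * m / (D * n - m).
  have optimal : (D - 2 * c - c ^+ 2 / D) * m + c ^+ 2 * n
      = (D * n - 2 * m) * D * m / (D * n - m).
    by rewrite /c; field; rewrite !gt_eqF.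
  by rewrite -optimal irr_le_quadratic // => u; rewrite ler_nat.
apply: optimal_bound_lt => //; rewrite zE /D /n -natrM.
by apply: sqrt2_mul_nat_neq; rewrite -(ltr0n R) -zE.
Qed.
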